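(* Let $(G,R,\omega)$ be a metric RPP instance. Let $v$ be a vertex to which vertex extraction (as defined below) is applicable, and let $R'$ be a result of extracting $v$ from $G\langle R\rangle$. Then: (i) $V(R')=V(R)\setminus\{v\}$; (ii) $\omega(R')\le\omega(R)$ and $|R'|\le|R|$; (iii) each vertex of $G\langle R'\rangle$ is balanced in $G\langle R'\rangle$ if and only if it is balanced in $G\langle R\rangle$; (iv) two vertices of $G\langle R'\rangle$ are connected in $G\langle R'\rangle$ if and only if they are connected in $G\langle R\rangle$; (v) every multiset $S$ of edges with $V(S)\subseteq V(R')$ is an Eulerian extension for $(G,R',\omega)$ if and only if it is one for $(G,R,\omega)$.
   Context: An RPP instance is a triple $(G,R,\omega)$, where $G=(V,E)$ is an undirected multigraph, $\omega\colon E\to\mathbb{N}$ assigns weights (parallel edges have equal weight), and $R$ is a nonempty multiset of edges of $G$. The instance is metric if $G$ contains an edge between any two vertices and the weights satisfy the triangle inequality $\omega(\{u,w\})\le\omega(\{u,v\})+\omega(\{v,w\})$ for all $u,v,w\in V$. For a multiset $X$ of edges: - $\omega(X)$ and $|X|$ are weight and cardinality with multiplicity; - $V(X)$ is the set of vertices incident to edges of $X$; - $G\langle X\rangle=(V(X),X)$; - $\uplus$ and $\setminus$ denote multiset sum and difference. A vertex is balanced if its degree is even (a loop counts 2). A multigraph without isolated vertices is Eulerian if it is connected and all vertices are balanced. An Eulerian extension for $(G,R,\omega)$ is a multiset $S$ of edges with $G\langle R\uplus S\rangle$ Eulerian. A block is a maximal subgraph without cut vertices. Vertex extraction. Let $v$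 be a vertex that is balanced in $G\langle R\rangle$ and lies in a connected component of $G\langle R\rangle$ with at least three vertices. Suppose moreover that $v$ is either not a cut vertex of $G\langle R\rangle$, or a cut vertex contained in exactly two blocks of $G\langle R\rangle$. Let $R_v\subseteq R$ be the required edges incident to $v$. (a) If $v$ is not a cut vertex of $G\langle R\rangle$: let $M_v$ be any perfect matching (of edges of $G$) on the set of vertices other than $v$ that are incident to an odd number of edges of $R_v$. The result is $R'=(R\setminus R_v)\uplus M_v$. (b) If $v$ is a cut vertex contained in exactly two blocks $A$ and $B$: let $a\ne v$ be a neighbor of $v$ in $A$ and $b\ne v$ a neighbor of $v$ in $B$, and let $R''=(R\setminus\{\{a,v\},\{b,v\}\})\uplus\{\{a,b\}\}$. If $v\notin V(R'')$, the result is $R''$. Otherwise $v$ is not a cut vertex of $G\langle R''\rangle$, and the result is the result of extracting $v$ from $G\langle R''\rangle$ according to (a). *)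

From HB Require Import structures.
From mathcomp Require Import all_boot.
Set Implicit Arguments. Unset Strict Implicit. Unset Printing Implicit Defensive.

(* The multigraph G = (V, E): V and E are finite types; each edge e has the
   (unordered) pair of endpoints given by [ends e] (a loop has equal ends).
   A multiset of edges of G is a multiplicity function {ffun E -> nat}. *)
Section RPP.
Variables (V E : finType) (ends : E -> V * V).

Definition mset := {ffun E -> nat}.

Definition incident (e : E) (x : V) : bool :=
  (x == (ends e).1) || (x == (ends e).2).

Definition links (e : E) (u w : V) : bool :=
  (ends e == (u, w)) || (ends e == (w, u)).

(* degree of x in G<X>, loops counted twice, multiplicities counted *)
Definition deg (X : mset) (x : V) : nat :=
  \sum_(e : E) X e * (((ends e).1 == x) + ((ends e).2 == x)).

Definition balanced (X : mset) (x : V) : bool := ~~ odd (deg X x).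

Definition VX (X : mset) : {set V} :=
  [set x | [exists e, (0 < X e) && incident e x]].

Definition weight (w : E -> nat) (X : mset) : nat := \sum_(e : E) X e * w e.
Definition card_ms (X : mset) : nat := \sum_(e : E) X e.

Definition msum (X Y : mset) : mset := [ffun e => X e + Y e].
Definition mdiff (X Y : mset) : mset := [ffun e => X e - Y e].
Definition single (e0 : E) : mset := [ffun e => nat_of_bool (e == e0)].
Definition sub_ms (X Y : mset) : Prop := forall e, X e <= Y e.

Definition adj (X : mset) : rel V :=
  fun x y => [exists e, (0 < X e) && links e x y].

Definition connectedX (W : {set V}) (F : mset) : Prop :=
  forall x y, x \in W -> y \in W -> connect (adj F) x y.

(* G<X> is Eulerian: connected and all vertices balanced
   (G<X> has no isolated vertices by construction) *)
Definition eulerian (X : mset) : Prop :=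
  connectedX (VX X) X /\ forall x, x \in VX X -> balanced X x.

Definition eulerian_extension (R S : mset) : Prop := eulerian (msum R S).

(* Subgraphs are pairs (W, F) of a vertex set and an edge multiset whose
   edges have both ends in W. *)
Definition rm_edges (F : mset) (x : V) : mset :=
  [ffun e => if incident e x then 0 else F e].

Definition ncomp (W : {set V}) (F : mset) : nat :=
  #|[set [set y in W | connect (adj F) x y] | x in W]|.

Definition is_cut (W : {set V}) (F : mset) (x : V) : bool :=
  (x \in W) && (ncomp W F < ncomp (W :\ x) (rm_edges F x)).

Definition is_subgraph (R : mset) (W : {set V}) (F : mset) : Prop :=
  W \subset VX R /\ sub_ms F R /\
  (forall e, 0 < F e -> (ends e).1 \in W /\ (ends e).2 \in W).

Definition no_cut_connected (W : {set V}) (F : mset) : Prop :=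
  connectedX W F /\ forall x, ~~ is_cut W F x.

Definition is_block (R : mset) (W : {set V}) (F : mset) : Prop :=
  is_subgraph R W F /\ no_cut_connected W F /\
  (forall W' F', is_subgraph R W' F' -> no_cut_connected W' F' ->
     W \subset W' -> sub_ms F F' -> W' = W /\ F' = F).

Definition two_blocks_of (R : mset) (v : V)
    (WA : {set V}) (FA : mset) (WB : {set V}) (FB : mset) : Prop :=
  is_block R WA FA /\ is_block R WB FB /\ (WA, FA) <> (WB, FB) /\
  v \in WA /\ v \in WB /\
  (forall W F, is_block R W F -> v \in W -> (W, F) = (WA, FA) \/ (W, F) = (WB, FB)).

Definition exactly_two_blocks (R : mset) (v : V) : Prop :=
  exists WA FA WB FB, two_blocks_of R v WA FA WB FB.

Definition Rv (R : mset) (v : V) : mset :=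
  [ffun e => if incident e v then R e else 0].

Definition odd_set (R : mset) (v : V) : {set V} :=
  [set x | (x != v) && odd (\sum_(e : E) Rv R v e * incident e x)].

Definition perfect_matching (O : {set V}) (M : mset) : Prop :=
  (forall e, M e <= 1) /\
  (forall e, 0 < M e -> [/\ (ends e).1 != (ends e).2, (ends e).1 \in O & (ends e).2 \in O]) /\
  (forall x, x \in O -> \sum_(e : E) M e * incident e x = 1).

Definition extract_a (R : mset) (v : V) (R' : mset) : Prop :=
  exists M, perfect_matching (odd_set R v) M /\ R' = msum (mdiff R (Rv R v)) M.

Definition extraction_applicable (R : mset) (v : V) : Prop :=
  [/\ v \in VX R, balanced R v,
      3 <= #|[set y in VX R | connect (adj R) v y]| &
      ~~ is_cut (VX R) R v \/ (is_cut (VX R) R v /\ exactly_two_blocks R v)].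

Definition extraction_result (R : mset) (v : V) (R' : mset) : Prop :=
  (~~ is_cut (VX R) R v /\ extract_a R v R') \/
  (is_cut (VX R) R v /\
   exists WA FA WB FB, two_blocks_of R v WA FA WB FB /\
   exists (a b : V) (ea eb eab : E),
     (a != v /\ b != v /\ 0 < FA ea /\ links ea a v /\ 0 < FB eb /\
      links eb b v /\ links eab a b) /\
     let R'' := msum (mdiff R (msum (single ea) (single eb))) (single eab) in
     (v \notin VX R'' -> R' = R'') /\ (v \in VX R'' -> extract_a R'' v R')).

Definition metric_instance (w : E -> nat) (R : mset) : Prop :=
  [/\ (exists e, 0 < R e),
      (forall e f u x, links e u x -> links f u x -> w e = w f),
      (forall u x, u != x -> exists e, links e u x) &
      (forall u x y e1 e2 e3, links e1 u y -> links e2 u x -> links e3 x y ->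
         w e1 <= w e2 + w e3)].

End RPP.

From Pilot Require Import Defs.
From mathcomp Require Import all_boot.
From mathcomp Require Import zify.
From Stdlib Require Import Classical.
Set Implicit Arguments. Unset Strict Implicit. Unset Printing Implicit Defensive.

(* Both extraction rules are made of one kind of step, a reduction of R at v
   ([reduces]): a multiset R1 that is no heavier for every weight satisfying
   the triangle inequality, has the same degree parities away from v, keeps
   the required edges avoiding v, creates no vertex, and whose edges join
   vertices already connected in G<R>.  Reductions compose.  The central
   lemma [reduction_properties] shows that a reduction R' which removes v and
   keeps the rest of v's component connected satisfies all five claims: the
   claims about G<R + S> follow by transporting parities and connectivity,
   bypassing v through its component.

   Rule (a) is such a reduction by double counting over the perfect matching
   ([rule_a_reduces]); when v is not a cut vertex, deleting v disconnects
   nothing ([not_cut_connect]), giving [rule_a_properties].  Rule (b) is the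
   shortcut ab ([shortcut_reduces]) possibly followed by rule (a); since every
   edge at v lies in one of the two blocks of v, every vertex reaches a or b
   without v ([reach_a_or_b]), giving [rule_b_properties]. *)

Section VertexExtraction.
Variables (V E : finType) (ends : E -> V * V).
Local Notation mset := {ffun E -> nat}.
Local Notation adj := (adj ends).
Local Notation VX := (VX ends).
Local Notation deg := (deg ends).
Local Notation links := (links ends).
Local Notation incident := (incident ends).
Local Notation balanced := (balanced ends).
Local Notation eulerian_extension := (eulerian_extension ends).
Local Notation rm_edges := (rm_edges ends).
Local Notation ncomp := (ncomp ends).
Local Notation is_cut := (is_cut ends).
Local Notation is_subgraph := (is_subgraph ends).
Local Notation no_cut_connected := (no_cut_connected ends).
Local Notation is_block := (is_block ends).
Local Notation two_blocks_of := (two_blocks_of ends).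
Local Notation Rv := (Rv ends).
Local Notation odd_set := (odd_set ends).
Local Notation perfect_matching := (perfect_matching ends).
Local Notation extract_a := (extract_a ends).

Lemma links_sym e x y : links e x y = links e y x.
Proof. by rewrite /Defs.links orbC. Qed.

Lemma linksE e x y : links e x y -> ends e = (x, y) \/ ends e = (y, x).
Proof. by case/orP => /eqP h; [left | right]. Qed.

Lemma links_self e : links e (ends e).1 (ends e).2.
Proof. by rewrite /Defs.links -surjective_pairing eqxx. Qed.

Lemma links_incident e x y : links e x y -> incident e x /\ incident e y.
Proof. by case/linksE; rewrite /Defs.incident => ->; rewrite !eqxx ?orbT. Qed.

Lemma incident_links e x y : incident e x -> incident e y -> x != y -> links e x y.
Proof.
rewrite /Defs.incident /Defs.links; case: (ends e) => p q /=.
by move=> /orP [] /eqP -> /orP [] /eqP ->; rewrite ?eqxx ?orbT.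
Qed.

Lemma links_avoid e x y v : links e x y -> x != v -> y != v -> ~~ incident e v.
Proof.
by case/linksE; rewrite /Defs.incident => -> xv yv; rewrite /= negb_or ![v == _]eq_sym xv yv.
Qed.

Lemma links_other_end e x y v : links e x v -> links e y v -> x != v -> x = y.
Proof.
move=> l1 l2 xv; case/linksE: l1 => h1; case/linksE: l2;
  rewrite h1 => -[] -> // => [|_] ->; by rewrite eqxx in xv.
Qed.

Lemma links_deg e p q x :
  links e p q -> ((ends e).1 == x) + ((ends e).2 == x) = (p == x) + (q == x).
Proof. by case/linksE => ->; rewrite //= addnC. Qed.

Lemma nonloop_deg e x :
  (ends e).1 != (ends e).2 -> ((ends e).1 == x) + ((ends e).2 == x) = incident e x.
Proof.
rewrite /Defs.incident; case: (ends e) => p q /= npq; rewrite ![_ == x]eq_sym.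
by case: (eqVneq x p) => [xp|//]; case: (eqVneq x q) => [xq|//]; rewrite -xp -xq eqxx in npq.
Qed.

Lemma spoke_deg e x v :
  x != v -> incident e v -> ((ends e).1 == x) + ((ends e).2 == x) = incident e x.
Proof.
rewrite /Defs.incident; case: (ends e) => p q /= xv; rewrite ![_ == x]eq_sym.
case: (eqVneq x p) => [xp|//]; case: (eqVneq x q) => [xq|//].
by rewrite -xp -xq orbb eq_sym (negbTE xv).
Qed.

Lemma adjP (X : mset) x y : reflect (exists e, 0 < X e /\ links e x y) (adj X x y).
Proof.
by apply: (iffP existsP) => -[e]; [case/andP | case] => h1 h2; exists e; rewrite ?h1.
Qed.

Lemma VXP (X : mset) x : reflect (exists e, 0 < X e /\ incident e x) (x \in VX X).
Proof.
by rewrite inE; apply: (iffP existsP) => -[e]; [case/andP | case] => h1 h2; exists e; rewrite ?h1.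
Qed.

Lemma adj_sym (X : mset) : symmetric (adj X).
Proof. by move=> x y; apply/adjP/adjP => -[e [Xe l]]; exists e; rewrite links_sym. Qed.

Lemma adj_csym (X : mset) : connect_sym (adj X).
Proof. exact/sym_connect_sym/adj_sym. Qed.

Lemma adj_VX (X : mset) x y : adj X x y -> x \in VX X /\ y \in VX X.
Proof. by case/adjP => e [Xe /links_incident [ix iy]]; split; apply/VXP; exists e. Qed.

Lemma connect_VX (X : mset) x y : connect (adj X) x y -> x != y -> x \in VX X /\ y \in VX X.
Proof.
have first_step z t : connect (adj X) z t -> z != t -> z \in VX X.
  case/connectP => -[|u p] /= pth ->; first by rewrite eqxx.
  by case/andP: pth => /adj_VX [].
move=> c xy; split; first exact: first_step c xy.
by apply: (first_step y x); rewrite 1?adj_csym // eq_sym.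
Qed.

Lemma component_VX (X : mset) v x : connect (adj X) v x -> x != v -> x \in VX X :\ v.
Proof. by move=> c xv; rewrite in_setD1 xv; case: (connect_VX c); rewrite // eq_sym. Qed.

Lemma adj_mono (X Y : mset) x y : sub_ms X Y -> adj X x y -> adj Y x y.
Proof. by move=> s /adjP [e [Xe l]]; apply/adjP; exists e; rewrite (leq_trans Xe (s e)). Qed.

Lemma connect_mono (X Y : mset) x y : sub_ms X Y -> connect (adj X) x y -> connect (adj Y) x y.
Proof. by move=> s; apply: connect_sub => p q /(adj_mono s) /connect1. Qed.

Lemma VX_mono (X Y : mset) : sub_ms X Y -> VX X \subset VX Y.
Proof.
by move=> s; apply/subsetP => x /VXP [e [Xe i]]; apply/VXP; exists e; rewrite (leq_trans Xe (s e)).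
Qed.

Lemma connect_coarsen (X Y : mset) x y :
  (forall e, 0 < X e -> connect (adj Y) (ends e).1 (ends e).2) ->
  connect (adj X) x y -> connect (adj Y) x y.
Proof.
move=> h; apply: connect_sub => p q /adjP [e [Xe /linksE l]].
by have := h e Xe; case: l => ->; rewrite // adj_csym.
Qed.

Lemma sum_msum (X Y : mset) (F : E -> nat) :
  \sum_(e : E) msum X Y e * F e = \sum_(e : E) X e * F e + \sum_(e : E) Y e * F e.
Proof. by rewrite -big_split; apply: eq_bigr => e _; rewrite ffunE mulnDl. Qed.

Lemma sum_single (e0 : E) (F : E -> nat) : \sum_(e : E) single e0 e * F e = F e0.
Proof.
rewrite (bigD1 e0) //= ffunE eqxx mul1n big1 ?addn0 // => e /negbTE ne.
by rewrite ffunE ne.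
Qed.

Lemma deg_msum (X Y : mset) x : deg (msum X Y) x = deg X x + deg Y x.
Proof. exact: sum_msum. Qed.

Lemma weight_msum (w : E -> nat) (X Y : mset) : weight w (msum X Y) = weight w X + weight w Y.
Proof. exact: sum_msum. Qed.

Lemma deg_single (e0 : E) x : deg (single e0) x = ((ends e0).1 == x) + ((ends e0).2 == x).
Proof. exact: sum_single. Qed.

Lemma weight_single (w : E -> nat) (e0 : E) : weight w (single e0) = w e0.
Proof. exact: sum_single. Qed.

Lemma card_weight1 (X : mset) : card_ms X = weight (fun=> 1) X.
Proof. by apply: eq_bigr => e _; rewrite muln1. Qed.

Lemma msum_mdiff (X Y : mset) : sub_ms Y X -> msum (mdiff X Y) Y = X.
Proof. by move=> s; apply/ffunP => e; rewrite !ffunE subnK. Qed.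

Lemma msum0 (X : mset) : msum X [ffun=> 0] = X.
Proof. by apply/ffunP => e; rewrite !ffunE addn0. Qed.

Lemma msum_subl (X Y : mset) : sub_ms X (msum X Y).
Proof. by move=> e; rewrite ffunE leq_addr. Qed.

Lemma VX_msum (X Y : mset) : VX (msum X Y) = VX X :|: VX Y.
Proof.
apply/setP => x; rewrite in_setU; apply/VXP/orP.
- by case=> e []; rewrite ffunE addn_gt0 => /orP [] h i; [left | right]; apply/VXP; exists e.
- by case=> /VXP [e [h i]]; exists e; rewrite ffunE addn_gt0 h ?orbT.
Qed.

Lemma adj_msumP (X Y : mset) x y :
  reflect (exists e, (0 < X e \/ 0 < Y e) /\ links e x y) (adj (msum X Y) x y).
Proof.
apply: (iffP (adjP _ _ _)) => -[e [p l]]; exists e; split=> //;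
  by move: p; rewrite ffunE addn_gt0 => /orP.
Qed.

Lemma deg_notin (X : mset) x : x \notin VX X -> deg X x = 0.
Proof.
move=> nx; apply: big1 => e _; case: (posnP (X e)) => [-> // | Xe].
have: ~~ incident e x by apply: contra nx => i; apply/VXP; exists e.
by rewrite /Defs.incident negb_or ![x == _]eq_sym => /andP [/negbTE -> /negbTE ->]; rewrite muln0.
Qed.

Lemma rm_sub (X : mset) v : sub_ms (rm_edges X v) X.
Proof. by move=> e; rewrite ffunE; case: ifP. Qed.

Lemma rm_mono (X Y : mset) v : sub_ms X Y -> sub_ms (rm_edges X v) (rm_edges Y v).
Proof. by move=> s e; rewrite !ffunE; case: ifP. Qed.

Lemma rm_notin (X : mset) v : v \notin VX X -> rm_edges X v = X.
Proof.
move=> nv; apply/ffunP => e; rewrite ffunE; case: ifP => // iv.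
by case: (posnP (X e)) => // Xe; case/VXP: nv; exists e.
Qed.

Lemma RvP (X : mset) v e : 0 < Rv X v e -> 0 < X e /\ incident e v.
Proof. by rewrite ffunE; case: ifP. Qed.

Lemma mdiff_Rv (X : mset) v : mdiff X (Rv X v) = rm_edges X v.
Proof. by apply/ffunP => e; rewrite !ffunE; case: ifP; rewrite ?subnn ?subn0. Qed.

Lemma split_Rv (X : mset) v : msum (rm_edges X v) (Rv X v) = X.
Proof. by apply/ffunP => e; rewrite !ffunE; case: ifP; rewrite ?addn0. Qed.

Lemma connect_map (e e' : rel V) (f : V -> V) x y :
  (forall p q, e p q -> connect e' (f p) (f q)) -> connect e x y -> connect e' (f x) (f y).
Proof.
move=> h /connectP [p pth ->]; elim: p x pth => [|z p IH] x //= /andP [exz pth].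
exact: connect_trans (h _ _ exz) (IH _ pth).
Qed.

Lemma connect_bypass (X Y : mset) v (N : {set V}) x y :
  (forall e p q, 0 < X e -> links e p q -> p != v -> q != v -> connect (adj Y) p q) ->
  (forall e z, 0 < X e -> links e v z -> z != v -> z \in N) ->
  {in N &, forall p q, connect (adj Y) p q} ->
  x != v -> y != v -> connect (adj X) x y -> connect (adj Y) x y.
Proof.
move=> away at_v connN xv yv c.
pose f z := if z == v then odflt v [pick n in N] else z.
suff: connect (adj Y) (f x) (f y) by rewrite /f (negbTE xv) (negbTE yv).
apply: connect_map c => p q /adjP [e [Xe l]].
have pickN z : z \in N -> connect (adj Y) (odflt v [pick n in N]) z.
  by move=> zN; case: pickP => [n nN | /(_ z)]; [apply: connN | rewrite zN].
rewrite /f; case: (eqVneq p v) => [pv | pv]; case: (eqVneq q v) => [qv | qv] //.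
- by rewrite pv in l; apply: pickN (at_v e q Xe l qv).
- by rewrite qv links_sym in l; rewrite adj_csym; apply: pickN (at_v e p Xe l pv).
- exact: away l pv qv.
Qed.

Lemma imset_factor (T U U' : finType) (A : {set T}) (f : T -> U) (f' : T -> U') x0 :
  {in A &, forall x y, f x = f y -> f' x = f' y} -> x0 \in A ->
  f' @: A = (fun u => f' (odflt x0 [pick x in A | f x == u])) @: (f @: A).
Proof.
move=> h _; rewrite -imset_comp; apply: eq_in_imset => x xA /=.
by case: pickP => [y /andP [yA /eqP fy] | /(_ x)]; [apply: h | rewrite xA eqxx].
Qed.

Lemma card_imset_factor (T U U' : finType) (A : {set T}) (f : T -> U) (f' : T -> U') :
  {in A &, forall x y, f x = f y -> f' x = f' y} -> #|f' @: A| <= #|f @: A|.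
Proof.
case: (set_0Vmem A) => [-> _ | [x0 x0A] h]; first by rewrite imset0 cards0.
by rewrite (imset_factor h x0A) leq_imset_card.
Qed.

Lemma imset_refine (T U U' : finType) (A : {set T}) (f : T -> U) (f' : T -> U') :
  {in A &, forall x y, f' x = f' y -> f x = f y} -> #|f' @: A| <= #|f @: A| ->
  {in A &, forall x y, f x = f y -> f' x = f' y}.
Proof.
move=> h le x y xA yA fxy.
pose g u := f (odflt x [pick z in A | f' z == u]).
have gE : f @: A = g @: (f' @: A) by apply: imset_factor.
have ginj : {in f' @: A &, injective g}.
  by apply/imset_injP; rewrite eqn_leq leq_imset_card -gE.
have gf z : z \in A -> g (f' z) = f z.
  move=> zA; rewrite /g; case: pickP => [t /andP [tA /eqP ftz] | /(_ z)]; last by rewrite zA eqxx.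
  exact: h ftz.
by apply: ginj; rewrite ?imset_f // !gf.
Qed.

Definition component (W : {set V}) (F : mset) (x : V) : {set V} :=
  [set y in W | connect (adj F) x y].

Lemma component_connect (W : {set V}) (F : mset) x y :
  connect (adj F) x y -> component W F x = component W F y.
Proof. by move=> c; apply/setP => z; rewrite !inE (same_connect (adj_csym F) c). Qed.

Lemma component_eqP (W : {set V}) (F : mset) x y :
  y \in W -> component W F x = component W F y -> connect (adj F) x y.
Proof. by move=> yW /setP /(_ y); rewrite !inE yW connect0 => /andP []. Qed.

Lemma ncomp_rm_le (W : {set V}) (F : mset) v :
  {in W :\ v &, forall x y, connect (adj F) x y -> connect (adj (rm_edges F v)) x y} ->
  ncomp (W :\ v) (rm_edges F v) <= ncomp W F.
Proof.
move=> h; rewrite /ncomp; apply: (@leq_trans #|component W F @: (W :\ v)|).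
  apply: card_imset_factor => x y xA yA eq_xy.
  have yW : y \in W by move: yA; rewrite in_setD1 => /andP [].
  exact/component_connect/(h x y xA yA)/(component_eqP yW eq_xy).
exact/subset_leq_card/imsetS/subD1set.
Qed.

Lemma not_cut_connect (W : {set V}) (F : mset) v x y :
  v \in W -> ~~ is_cut W F v -> x \in W :\ v -> y \in W :\ v ->
  connect (adj F) v x -> connect (adj F) v y -> connect (adj (rm_edges F v)) x y.
Proof.
move=> vW nc xA yA cx cy.
have refine : {in W :\ v &, forall p q, component (W :\ v) (rm_edges F v) p =
    component (W :\ v) (rm_edges F v) q -> component W F p = component W F q}.
  move=> p q _ qA /(component_eqP qA) c.
  by apply: component_connect; apply: connect_mono c; apply: rm_sub.
have few : #|component (W :\ v) (rm_edges F v) @: (W :\ v)| <= #|component W F @: (W :\ v)|.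
  apply: leq_trans (_ : ncomp W F <= _); first by move: nc; rewrite /is_cut vW -leqNgt.
  apply/subset_leq_card/subsetP => C /imsetP [z zW ->]; apply/imsetP.
  case: (eqVneq z v) => [-> | zv]; last by exists z; rewrite // in_setD1 zv.
  by exists x => //; apply: component_connect.
apply: (component_eqP yA); apply: (imset_refine refine few) => //.
by rewrite -(component_connect _ cx) -(component_connect _ cy).
Qed.

Definition triangle (w : E -> nat) : Prop :=
  forall u x y e1 e2 e3, links e1 u y -> links e2 u x -> links e3 x y -> w e1 <= w e2 + w e3.

(* Both extraction rules are
   composed of such reductions. *)
Definition reduces (v : V) (R R1 : mset) : Prop :=
  [/\ forall w, triangle w -> weight w R1 <= weight w R,
      forall x, x != v -> odd (deg R1 x) = odd (deg R x),
      sub_ms (rm_edges R v) (rm_edges R1 v),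
      VX R1 \subset VX R &
      forall e, 0 < R1 e -> connect (adj R) (ends e).1 (ends e).2].

Lemma reduces_refl v (R : mset) : reduces v R R.
Proof.
split=> // e Re; apply: connect1; apply/adjP; exists e; split=> //; exact: links_self.
Qed.

Lemma reduces_trans v (R R1 R2 : mset) : reduces v R R1 -> reduces v R1 R2 -> reduces v R R2.
Proof.
move=> [w1 p1 s1 V1 c1] [w2 p2 s2 V2 c2]; split.
- by move=> w tw; apply: leq_trans (w2 w tw) (w1 w tw).
- by move=> x xv; rewrite p2 ?p1.
- by move=> e; apply: leq_trans (s1 e) (s2 e).
- exact: subset_trans V2 V1.
- by move=> e /c2; apply: connect_coarsen c1.
Qed.

Lemma avoid_two (S : {set V}) p q : 2 < #|S| -> exists2 y, y \in S & (y != p) && (y != q).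
Proof.
move=> S3; apply/exists_inP; apply: contraLR S3; rewrite negb_exists_in -leqNgt => /forall_inP h.
apply: leq_trans (_ : #|[set p; q]| <= 2); last by rewrite cards2; case: (p != q).
by apply/subset_leq_card/subsetP => y /h; rewrite !inE negb_and !negbK.
Qed.

Definition extraction_properties (w : E -> nat) (R : mset) (v : V) (R' : mset) : Prop :=
  [/\ VX R' = VX R :\ v,
      weight w R' <= weight w R /\ card_ms R' <= card_ms R,
      (forall x, x \in VX R' -> balanced R' x = balanced R x),
      (forall x y, x \in VX R' -> y \in VX R' ->
         connect (adj R') x y = connect (adj R) x y) &
      (forall S : mset, VX S \subset VX R' ->
         (eulerian_extension R' S <-> eulerian_extension R S))].

Section Reduction.
Variables (R R' : mset) (v : V).
Hypothesis red : reduces v R R'.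
Hypothesis v_gone : v \notin VX R'.
Hypothesis component_kept : forall x y, x != v -> y != v ->
  connect (adj R) v x -> connect (adj R) v y -> connect (adj R') x y.
Hypothesis component_big : 3 <= #|[set y in VX R | connect (adj R) v y]|.
Hypothesis v_balanced : balanced R v.

Lemma rm_sub_reduced : sub_ms (rm_edges R v) R'.
Proof. by case: red => _ _ s _ _; rewrite -(rm_notin v_gone). Qed.

(* Claim (i): a vertex x != v of G<R> either keeps an edge avoiding v, or is
   a neighbour of v and so is connected in G<R'> to a third vertex. *)
Lemma reduced_support : VX R' = VX R :\ v.
Proof.
case: red => _ _ _ sub _; apply/eqP; rewrite eqEsubset; apply/andP; split.
  apply/subsetP => x xR'; rewrite in_setD1 (subsetP sub) // andbT.
  by apply: contraNneq v_gone => <-.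
apply/subsetP => x; rewrite in_setD1 => /andP [xv /VXP [e [Re ie]]].
case: (boolP (incident e v)) => iv; last first.
  apply/VXP; exists e; split=> //.
  by apply: leq_trans (rm_sub_reduced e); rewrite ffunE (negbTE iv).
have cx : connect (adj R) v x.
  by apply: connect1; apply/adjP; exists e; rewrite incident_links // eq_sym.
have [y] := avoid_two x v component_big; rewrite inE => /andP [_ cy] /andP [yx yv].
by case: (connect_VX (component_kept xv yv cx cy)); rewrite // eq_sym.
Qed.

Lemma connect_unreduce (S : mset) x y :
  connect (adj (msum R' S)) x y -> connect (adj (msum R S)) x y.
Proof.
case: red => _ _ _ _ edges; apply: connect_coarsen => e /[!ffunE]; rewrite addn_gt0 => /orP [].
- by move/edges; apply: connect_mono; apply: msum_subl.
- by move=> Se; apply: connect1; apply/adjP; exists e; rewrite ffunE addn_gt0 Se orbT links_self.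
Qed.

Lemma connect_reduce (S : mset) x y : v \notin VX S -> x != v -> y != v ->
  connect (adj (msum R S)) x y -> connect (adj (msum R' S)) x y.
Proof.
move=> vS; have S_avoids e : 0 < S e -> ~~ incident e v.
  by move=> Se; apply: contra vS => iv; apply/VXP; exists e.
apply: (@connect_bypass _ _ v [set z | (z != v) && connect (adj R) v z]).
- move=> e p q /[!ffunE]; rewrite addn_gt0 => RSe l pv qv; apply: connect1; apply/adj_msumP.
  exists e; split=> //; case/orP: RSe; last by right.
  by left; apply: leq_trans (rm_sub_reduced e); rewrite ffunE (negbTE (links_avoid l pv qv)).
- move=> e z /[!ffunE]; rewrite addn_gt0 => /orP [Re | Se] l zv.
    by rewrite inE zv; apply: connect1; apply/adjP; exists e.
  by have := S_avoids e Se; rewrite (links_incident l).1.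
- move=> p q /[!inE] /andP [pv cp] /andP [qv cq].
  by apply: connect_mono (component_kept pv qv cp cq); apply: msum_subl.
Qed.

Lemma odd_deg_reduced (S : mset) x :
  x != v -> odd (deg (msum R' S) x) = odd (deg (msum R S) x).
Proof. by case: red => _ par _ _ _ xv; rewrite !deg_msum !oddD par. Qed.

(* Claim (v): S avoids v, so v stays balanced in G<R + S>, and connectivity
   transfers both ways; v itself is joined to the rest through a neighbour. *)
Lemma eulerian_extension_reduced (S : mset) :
  VX S \subset VX R' -> eulerian_extension R' S <-> eulerian_extension R S.
Proof.
move=> SR'; have RR' : VX R' \subset VX R by case: red.
have vS : v \notin VX S by apply: contra v_gone; apply: (subsetP SR').
have inR' x : x \in VX R' -> x != v by rewrite reduced_support in_setD1 => /andP [].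
rewrite /eulerian_extension /eulerian /connectedX !VX_msum.
rewrite (setUidPl SR') (setUidPl (subset_trans SR' RR')).
split=> -[conn bal]; split.
- have [n0] := avoid_two v v component_big; rewrite inE => /andP [n0R cn0] /andP [n0v _].
  have to_n0 z : z \in VX R -> connect (adj (msum R S)) n0 z.
    case: (eqVneq z v) => [-> _ | zv zR].
      by rewrite adj_csym; apply: connect_mono cn0; apply: msum_subl.
    by apply: connect_unreduce; apply: conn; rewrite reduced_support in_setD1 ?zv ?n0v.
  by move=> x y xR yR; apply: connect_trans (to_n0 _ yR); rewrite adj_csym to_n0.
- move=> x xR; case: (eqVneq x v) => [-> | xv].
    by rewrite /balanced deg_msum (deg_notin vS) addn0.
  by move: (bal x); rewrite /balanced odd_deg_reduced // reduced_support in_setD1 xv; apply.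
- by move=> x y xR' yR'; apply: connect_reduce; rewrite ?inR' ?conn ?(subsetP RR').
- move=> x xR'; move: (bal x (subsetP RR' x xR')).
  by rewrite /balanced odd_deg_reduced ?inR'.
Qed.

(* All five claims; (ii) uses that cardinality is a weight obeying the
   triangle inequality, and (iv) is (v)'s connectivity transfer with S = 0. *)
Lemma reduction_properties w : triangle w -> extraction_properties w R v R'.
Proof.
move=> tw; have [cost par _ _ _] := red.
have inR' x : x \in VX R' -> x != v by rewrite reduced_support in_setD1 => /andP [].
have v_notin0 : v \notin VX [ffun=> 0] by apply/VXP => -[e []]; rewrite ffunE.
split.
- exact: reduced_support.
- by rewrite !card_weight1; split; apply: cost.
- by move=> x /inR' xv; rewrite /balanced par.
- move=> x y /inR' xv /inR' yv; apply/idP/idP.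
  + by have := @connect_unreduce [ffun=> 0] x y; rewrite !msum0.
  + by have := connect_reduce v_notin0 xv yv; rewrite !msum0.
- exact: eulerian_extension_reduced.
Qed.

End Reduction.

Lemma odd_set_spoke (R : mset) v x :
  x \in odd_set R v -> x != v /\ exists e, 0 < Rv R v e /\ links e x v.
Proof.
rewrite inE => /andP [xv odd_x]; split=> //.
case: (boolP [exists e, (0 < Rv R v e) && links e x v]) => [/existsP [e /andP] | none].
  by exists e.
move: odd_x; rewrite big1 // => e _; case: (posnP (Rv R v e)) => [-> // | Rve].
case: (boolP (incident e x)) => [ix | _]; last by rewrite muln0.
move: none; rewrite negb_exists => /forallP /(_ e).
by rewrite Rve incident_links // (RvP Rve).2.
Qed.

Lemma odd_set_adj (R : mset) v x : x \in odd_set R v -> adj R x v.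
Proof. by case/odd_set_spoke => _ [e [/RvP [Re _] l]]; apply/adjP; exists e. Qed.

Lemma odd_deg_Rv (R : mset) v x : x != v -> odd (deg (Rv R v) x) = (x \in odd_set R v).
Proof.
move=> xv; rewrite inE xv /=; congr odd; apply: eq_bigr => e _.
by case: (posnP (Rv R v e)) => [-> // | /RvP [_ iv]]; rewrite (spoke_deg xv iv).
Qed.

Lemma deg_matching (O : {set V}) (M : mset) x :
  perfect_matching O M -> deg M x = (x \in O).
Proof.
move=> [_ [ends_in one]].
have -> : deg M x = \sum_(e : E) M e * incident e x.
  apply: eq_bigr => e _; case: (posnP (M e)) => [-> // | /ends_in [nl _ _]].
  by rewrite nonloop_deg.
case: (boolP (x \in O)) => xO; first exact: one.
apply: big1 => e _; case: (posnP (M e)) => [-> // | /ends_in [_ e1 e2]].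
case: (boolP (incident e x)) => [ix | _]; last by rewrite muln0.
by case/orP: ix => /eqP xe; rewrite xe ?e1 ?e2 in xO.
Qed.

(* Double counting over a perfect matching on O: every vertex of O is the
   endpoint of exactly one matching edge. *)
Lemma matching_double_count (O : {set V}) (M : mset) (f : V -> nat) :
  perfect_matching O M ->
  \sum_(e : E) M e * (f (ends e).1 + f (ends e).2) = \sum_(x in O) f x.
Proof.
move=> [_ [ends_in one]].
transitivity (\sum_(e : E) M e * \sum_(x in O) incident e x * f x).
  apply: eq_bigr => e _; case: (posnP (M e)) => [-> // | /ends_in [nl e1 e2]]; congr (_ * _).
  rewrite (bigD1 (ends e).1) //= (bigD1 (ends e).2) /=; last by rewrite e2 eq_sym.
  rewrite big1 ?addn0; first by rewrite /Defs.incident !eqxx ?orbT !mul1n.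
  by move=> x /andP [/andP [_ x1] x2]; rewrite /Defs.incident (negbTE x1) (negbTE x2).
under eq_bigr => e _ do rewrite big_distrr /=.
rewrite exchange_big; apply: eq_bigr => x xO.
under eq_bigr => e _ do rewrite mulnA.
by rewrite -big_distrl /= one // mul1n.
Qed.

(* The triangle inequality makes the matching no heavier than R_v: each
   matching edge xy is bounded by the two required edges xv and vy. *)
Lemma matching_weight (w : E -> nat) (R M : mset) v :
  triangle w -> perfect_matching (odd_set R v) M -> weight w M <= weight w (Rv R v).
Proof.
move=> tw pm; have [_ [ends_in _]] := pm; set O := odd_set R v in pm ends_in *.
case: (set_0Vmem O) => [O0 | [x0 /odd_set_spoke [_ [e0 _]]]].
  rewrite /weight big1 // => e _; case: (posnP (M e)) => [-> // | /ends_in [_ +]].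
  by rewrite O0 inE.
pose spoke x := odflt e0 [pick e | (0 < Rv R v e) && links e x v].
have spokeP x : x \in O -> 0 < Rv R v (spoke x) /\ links (spoke x) x v.
  move=> /odd_set_spoke [_ [e [Rve l]]]; rewrite /spoke.
  by case: pickP => [e' /andP [] // | /(_ e)]; rewrite Rve l.
have spoke_inj : {in O &, injective spoke}.
  move=> x y xO yO sxy; have [xv _] := odd_set_spoke xO.
  have [_ lx] := spokeP x xO; have [_ ly] := spokeP y yO.
  by rewrite sxy in lx; apply: links_other_end lx ly xv.
apply: (@leq_trans (\sum_(e : E) M e * (w (spoke (ends e).1) + w (spoke (ends e).2)))).
  apply: leq_sum => e _; case: (posnP (M e)) => [-> // | /ends_in [_ e1 e2]].
  rewrite leq_mul2l; apply/orP; right.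
  by apply: tw (links_self e) (spokeP _ e1).2 _; rewrite links_sym; apply: (spokeP _ e2).2.
rewrite (@matching_double_count _ _ (fun x => w (spoke x)) pm) -(big_imset _ spoke_inj) /=.
apply: (@leq_trans (\sum_(e in spoke @: O) Rv R v e * w e)).
  by apply: leq_sum => e /imsetP [x xO ->]; rewrite leq_pmull // (spokeP x xO).1.
by rewrite big_mkcond; apply: leq_sum => e _; case: ifP.
Qed.

(* Rule (a) is a reduction at v: the matching is paid for by R_v, and it
   has odd degree exactly where R_v has. *)
Lemma rule_a_reduces (R M : mset) v :
  perfect_matching (odd_set R v) M -> reduces v R (msum (mdiff R (Rv R v)) M).
Proof.
move=> pm; have [_ [ends_in _]] := pm; rewrite mdiff_Rv.
have odd_VX x : x \in odd_set R v -> x \in VX R by move/odd_set_adj/adj_VX => [].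
split.
- move=> w tw; rewrite -{2}(split_Rv R v) !weight_msum leq_add2l.
  exact: matching_weight.
- move=> x xv; rewrite -{2}(split_Rv R v) !deg_msum !oddD.
  by rewrite (deg_matching x pm) oddb odd_deg_Rv.
- by move=> e; rewrite !ffunE; case: ifP => // _; rewrite leq_addr.
- rewrite VX_msum subUset (VX_mono (rm_sub R v)) /=.
  apply/subsetP => x /VXP [e [Me ie]]; have [_ e1 e2] := ends_in e Me.
  by case/orP: ie => /eqP ->; apply: odd_VX.
- move=> e; rewrite ffunE addn_gt0 => /orP [Re | Me].
    apply: connect1; apply/adjP; exists e; split; last exact: links_self.
    exact: leq_trans Re (rm_sub R v e).
  have [_ e1 e2] := ends_in e Me.
  by apply: connect_trans (connect1 (odd_set_adj e1)) _; rewrite adj_csym connect1 ?odd_set_adj.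
Qed.

(* Rule (a) removes v: the matching avoids v, which is not in odd_set. *)
Lemma rule_a_removes (R M : mset) v :
  perfect_matching (odd_set R v) M -> v \notin VX (msum (mdiff R (Rv R v)) M).
Proof.
move=> [_ [ends_in _]]; rewrite mdiff_Rv VX_msum in_setU negb_or; apply/andP; split.
  by apply/VXP => -[e []]; rewrite ffunE => + iv; rewrite iv.
apply/VXP => -[e [Me ie]]; have [_ e1 e2] := ends_in e Me.
by case/orP: ie => /eqP ve; [move: e1 | move: e2]; rewrite -ve inE eqxx.
Qed.

Lemma rule_a_properties (w : E -> nat) (R R' : mset) v :
  triangle w -> v \in VX R -> balanced R v ->
  3 <= #|[set y in VX R | connect (adj R) v y]| -> ~~ is_cut (VX R) R v ->
  extract_a R v R' -> extraction_properties w R v R'.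
Proof.
move=> tw vR bal big nc [M [pm ->]].
apply: (reduction_properties (rule_a_reduces pm) (rule_a_removes pm) _ big bal tw).
move=> x y xv yv cx cy; rewrite mdiff_Rv; apply: connect_mono (msum_subl _ _) _.
exact: not_cut_connect vR nc (component_VX cx xv) (component_VX cy yv) cx cy.
Qed.

(* The shortcut of rule (b): the required edges ea = av and eb = vb are
   replaced by an edge eab = ab. *)
Definition shortcut (R : mset) (ea eb eab : E) : mset :=
  msum (mdiff R (msum (single ea) (single eb))) (single eab).

(* By the triangle inequality, the shortcut is a reduction at v. *)
Lemma shortcut_reduces (R : mset) v a b ea eb eab :
  a != v -> b != v -> a != b -> 0 < R ea -> 0 < R eb ->
  links ea a v -> links eb b v -> links eab a b ->
  reduces v R (shortcut R ea eb eab).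
Proof.
move=> av bv ab Rea Reb la lb lab.
have ea_eb : ea != eb.
  by apply: contraNneq ab => eq_e; rewrite eq_e in la; apply/eqP; apply: links_other_end la lb av.
set D := msum (single ea) (single eb).
have RD : msum (mdiff R D) D = R.
  apply: msum_mdiff => f; rewrite !ffunE.
  by case: (eqVneq f ea) => [-> | _]; [rewrite (negbTE ea_eb) | case: (eqVneq f eb) => [-> | _]].
have pos_diff e : 0 < mdiff R D e -> 0 < R e.
  by rewrite ffunE => p; apply: leq_trans p (leq_subr _ _).
have [ia iva] := links_incident la; have [ib ivb] := links_incident lb.
have cab : connect (adj R) a b.
  apply: (@connect_trans _ _ v); apply: connect1; apply/adjP; [exists ea | exists eb];
    by rewrite // links_sym.
split.
- move=> w tw; rewrite -[X in _ <= weight w X]RD !weight_msum leq_add2l !weight_single.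
  by apply: tw lab la _; rewrite links_sym.
- move=> x xv; rewrite -[in RHS]RD !deg_msum !deg_single.
  rewrite (links_deg x la) (links_deg x lb) (links_deg x lab).
  by rewrite [v == x]eq_sym (negbTE xv) !addn0 addnA.
- move=> f; rewrite !ffunE; case: ifP => // nif.
  have fa : (f == ea) = false by apply: contraFF nif => /eqP ->.
  have fb : (f == eb) = false by apply: contraFF nif => /eqP ->.
  by rewrite fa fb subn0 leq_addr.
- apply/subsetP => x /VXP [e []]; rewrite ffunE addn_gt0 => /orP [/pos_diff Re ie | ee].
    by apply/VXP; exists e.
  have aR : a \in VX R by apply/VXP; exists ea.
  have bR : b \in VX R by apply/VXP; exists eb.
  move: ee; rewrite ffunE; case: eqP => // -> _.
  by case/orP => /eqP ->; case/linksE: lab => -> /=.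
- move=> e; rewrite ffunE addn_gt0 => /orP [/pos_diff Re | ee].
    by apply: connect1; apply/adjP; exists e; rewrite links_self.
  move: ee; rewrite ffunE; case: eqP => // -> _.
  by case/linksE: lab => ->; rewrite // adj_csym.
Qed.

(* Sizes of subgraphs, measured by #|W| + card_ms F, bound the growth
   towards a block. *)
Lemma card_ms_le (F R : mset) : sub_ms F R -> card_ms F <= card_ms R.
Proof. by move=> s; apply: leq_sum => e _. Qed.

Lemma card_ms_lt (F R : mset) : sub_ms F R -> F <> R -> card_ms F < card_ms R.
Proof.
move=> s neq; have [e lt] : exists e, F e < R e.
  apply/existsP; apply: contraT; rewrite negb_exists => /forallP none.
  by case: neq; apply/ffunP => e; apply/eqP; rewrite eqn_leq s leqNgt none.
rewrite /card_ms (bigD1 e) //= [X in _ < X](bigD1 e) //= -addSn.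
by apply: leq_add lt _; apply: leq_sum => f _.
Qed.

Lemma larger_subgraph (R : mset) W F :
  is_subgraph R W F -> no_cut_connected W F -> ~ is_block R W F ->
  exists W', exists F', [/\ is_subgraph R W' F', no_cut_connected W' F',
    W \subset W' & #|W| + card_ms F < #|W'| + card_ms F'].
Proof.
move=> sg nc nb.
have [W' [F' [sg' nc' sW sF neq]]] : exists W', exists F', [/\ is_subgraph R W' F',
    no_cut_connected W' F', W \subset W', sub_ms F F' & ~ (W' = W /\ F' = F)].
  apply: NNPP => none; apply: nb; do 2!split=> //; move=> W' F' sg' nc' sW sF.
  by apply: NNPP => neq; apply: none; exists W', F'.
exists W', F'; split=> //; case: (eqVneq W' W) => [eW | nW].
  by rewrite eW ltn_add2l; apply: card_ms_lt => // eF; apply: neq.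
by rewrite -addSn leq_add ?card_ms_le // proper_card // properEneq eq_sym nW.
Qed.

(* A connected subgraph without cut vertices grows into a block, since any
   proper extension is strictly larger and sizes are bounded. *)
Lemma block_above (R : mset) W F : is_subgraph R W F -> no_cut_connected W F ->
  exists W', exists F', is_block R W' F' /\ W \subset W'.
Proof.
have size_le W' F' : is_subgraph R W' F' -> #|W'| + card_ms F' <= #|V| + card_ms R.
  by case=> _ [sF _]; rewrite leq_add ?max_card ?card_ms_le.
have [n] : exists n, #|V| + card_ms R - (#|W| + card_ms F) < n by eexists.
elim: n W F => // n IH W F lt sg nc.
case: (classic (is_block R W F)) => [b | nb]; first by exists W, F.
have [W' [F' [sg' nc' sW lt']]] := larger_subgraph sg nc nb.
have [|W'' [F'' [b sW']]] := IH W' F' _ sg' nc'.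
  by have := size_le _ _ sg'; lia.
by exists W'', F''; split; last exact: subset_trans sW sW'.
Qed.

(* Bounds on the number of components, used to see that a single edge has no
   cut vertex. *)
Lemma ncomp_gt0 (W : {set V}) (F : mset) x : x \in W -> 0 < ncomp W F.
Proof. by move=> xW; apply/card_gt0P; exists (component W F x); apply: imset_f. Qed.

Lemma ncomp_le_card (W : {set V}) (F : mset) : ncomp W F <= #|W|.
Proof. exact: leq_imset_card. Qed.

(* A required edge between distinct vertices is a connected subgraph without
   cut vertices, hence lies in a block. *)
Lemma edge_in_block (R : mset) e v u : 0 < R e -> links e v u -> u != v ->
  exists W, exists F, [/\ is_block R W F, v \in W & u \in W].
Proof.
move=> Re l uv; have [iv iu] := links_incident l.
have sg : is_subgraph R [set v; u] (single e).
  split; [|split].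
  - by apply/subsetP => x /set2P [] ->; apply/VXP; exists e.
  - by move=> f; rewrite ffunE; case: eqP => // ->.
  - move=> f; rewrite ffunE; case: eqP => // -> _.
    by case/linksE: l => ->; rewrite !inE !eqxx ?orbT.
have nc : no_cut_connected [set v; u] (single e).
  split.
  - move=> x y /set2P [] -> /set2P [] -> //; apply: connect1; apply/adjP; exists e;
      by rewrite ffunE eqxx // links_sym.
  - move=> x; rewrite /is_cut; case: (boolP (x \in [set v; u])) => //= xW.
    rewrite -leqNgt (leq_trans (ncomp_le_card _ _)) // (leq_trans _ (ncomp_gt0 _ xW)) //.
    by have := cardsD1 x [set v; u]; rewrite xW cards2 eq_sym uv /=; lia.
have [W [F [b vuW]]] := block_above sg nc.
by exists W, F; split=> //; apply: (subsetP vuW); rewrite !inE eqxx ?orbT.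
Qed.

Lemma block_connect (R : mset) W F v x y : is_block R W F -> v \in W ->
  x \in W :\ v -> y \in W :\ v -> connect (adj (rm_edges R v)) x y.
Proof.
move=> [[_ [sF _]] [[conn nocut] _]] vW xW yW.
have inW z : z \in W :\ v -> z \in W by rewrite in_setD1 => /andP [].
apply: connect_mono (rm_mono v sF) _.
apply: (not_cut_connect vW (nocut v) xW yW).
  exact: conn vW (inW _ xW).
exact: conn vW (inW _ yW).
Qed.

Lemma block_end (R : mset) W F e a v : is_block R W F -> 0 < F e -> links e a v -> a \in W.
Proof. by move=> [[_ [_ ends_in]] _] /ends_in [e1 e2] /linksE [] h; rewrite h in e1 e2. Qed.

Section TwoBlocks.
Variables (R : mset) (v : V) (WA : {set V}) (FA : mset) (WB : {set V}) (FB : mset).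
Variables (a b : V) (ea eb : E).
Hypothesis two_blocks : two_blocks_of R v WA FA WB FB.
Hypotheses (av : a != v) (FAea : 0 < FA ea) (la : links ea a v).
Hypotheses (bv : b != v) (FBeb : 0 < FB eb) (lb : links eb b v).

Local Notation Rrm := (adj (rm_edges R v)).

(* Without v, every other vertex of v's component is reached from a or b,
   because each edge at v lies in block A or in block B. *)
Lemma reach_a_or_b x : x != v -> connect (adj R) v x -> connect Rrm a x \/ connect Rrm b x.
Proof.
have [bA [bB [_ [vA [vB only]]]]] := two_blocks.
have aA : a \in WA :\ v by rewrite in_setD1 av (block_end bA FAea la).
have bB' : b \in WB :\ v by rewrite in_setD1 bv (block_end bB FBeb lb).
pose P := [pred z | [|| z == v, connect Rrm a z | connect Rrm b z]].
have closedP : closed (adj R) P.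
  apply: (intro_closed (adj_csym R)) => y z /adjP [e [Re l]] /[!inE] Py.
  case: (eqVneq z v) => [-> // | zv]; case: (eqVneq y v) => [yv | yv].
    rewrite yv in l; have [W [F [bW vW zW]]] := edge_in_block Re l zv.
    have zW' : z \in W :\ v by rewrite in_setD1 zv.
    case: (only W F bW vW) => -[eW _]; rewrite eW in zW'.
    - by rewrite (block_connect bA vA aA zW') orbT.
    - by rewrite (block_connect bB vB bB' zW') !orbT.
  have yz : Rrm y z by apply/adjP; exists e; rewrite ffunE (negbTE (links_avoid l yv zv)).
  move: Py; rewrite (negbTE yv) /= => /orP [] c; rewrite (connect_trans c (connect1 yz)) ?orbT //.
move=> xv /(closed_connect closedP); rewrite !inE eqxx (negbTE xv) /=.
by move/esym/orP.
Qed.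

(* Since v is a cut vertex, a and b are separated once v is deleted:
   otherwise deleting v would disconnect nothing. *)
Lemma a_b_separated : is_cut (VX R) R v -> ~~ connect Rrm a b.
Proof.
move=> /andP [_]; apply: contraTN => cab; rewrite -leqNgt; apply: ncomp_rm_le => x y xA yA.
have reach_a z : z \in [set z | (z != v) && connect (adj R) v z] -> connect Rrm a z.
  by rewrite inE => /andP [zv /(reach_a_or_b zv)] [] // /(connect_trans cab).
apply: (connect_bypass (v := v) (N := [set z | (z != v) && connect (adj R) v z])).
- move=> e p q Re l pv qv; apply: connect1; apply/adjP; exists e.
  by rewrite ffunE (negbTE (links_avoid l pv qv)).
- by move=> e z Re l zv; rewrite inE zv /=; apply: connect1; apply/adjP; exists e.
- by move=> p q /reach_a cp /reach_a cq; rewrite adj_csym in cp; apply: connect_trans cp cq.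
- by move: xA; rewrite in_setD1 => /andP [].
- by move: yA; rewrite in_setD1 => /andP [].
Qed.

(* The rest of v's component stays connected through a, since
   everything reaches a or b avoiding v, and the new edge joins a and b. *)
Lemma rule_b_properties (w : E -> nat) (R' : mset) eab :
  triangle w -> balanced R v -> 3 <= #|[set y in VX R | connect (adj R) v y]| ->
  is_cut (VX R) R v -> links eab a b ->
  (v \notin VX (shortcut R ea eb eab) -> R' = shortcut R ea eb eab) ->
  (v \in VX (shortcut R ea eb eab) -> extract_a (shortcut R ea eb eab) v R') ->
  extraction_properties w R v R'.
Proof.
move=> tw bal big cut lab shortcut_only then_a.
set R'' := shortcut R ea eb eab in shortcut_only then_a.
have ab : a != b by apply: contraNneq (a_b_separated cut) => ->.
have [[[_ [sA _]] _] [[[_ [sB _]] _] _]] := two_blocks.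
have red1 : reduces v R R''.
  exact: shortcut_reduces av bv ab (leq_trans FAea (sA ea)) (leq_trans FBeb (sB eb)) la lb lab.
have [red2 gone] : reduces v R'' R' /\ v \notin VX R'.
  case: (boolP (v \in VX R'')) => [/then_a [M [pm ->]] | vR''].
    by split; [apply: rule_a_reduces | apply: rule_a_removes].
  by rewrite shortcut_only //; split; first exact: reduces_refl.
apply: (reduction_properties (reduces_trans red1 red2) gone _ big bal tw).
have keep := rm_sub_reduced (reduces_trans red1 red2) gone.
have ab' : adj R' a b.
  apply/adjP; exists eab; split=> //; apply: leq_trans (rm_sub_reduced red2 gone eab).
  by rewrite !ffunE (negbTE (links_avoid lab av bv)) eqxx addn1.
have from_a z : z != v -> connect (adj R) v z -> connect (adj R') a z.
  move=> zv /(reach_a_or_b zv) [] /(connect_mono keep) //.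
  exact: connect_trans (connect1 ab').
by move=> x y xv yv cx cy; apply: connect_trans (from_a y yv cy); rewrite adj_csym from_a.
Qed.

End TwoBlocks.

End VertexExtraction.

Theorem mainTheorem14 (V E : finType) (ends : E -> V * V) (w : E -> nat)
    (R : {ffun E -> nat}) (v : V) (R' : {ffun E -> nat}) :
  metric_instance ends w R ->
  extraction_applicable ends R v ->
  extraction_result ends R v R' ->
  [/\ VX ends R' = VX ends R :\ v,
      weight w R' <= weight w R /\ card_ms R' <= card_ms R,
      (forall x, x \in VX ends R' -> balanced ends R' x = balanced ends R x),
      (forall x y, x \in VX ends R' -> y \in VX ends R' ->
         connect (adj ends R') x y = connect (adj ends R) x y) &
      (forall S : {ffun E -> nat}, VX ends S \subset VX ends R' ->
         (eulerian_extension ends R' S <-> eulerian_extension ends R S))].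
Proof.
move=> [_ _ _ tw] [vR bal big _] [[nc rule_a] | [cut rule_b]].
- exact: rule_a_properties tw vR bal big nc rule_a.
- case: rule_b => WA [FA [WB [FB [two [a [b [ea [eb [eab [[av [bv [FAea [la [FBeb [lb lab]]]]]]
    [shortcut_only then_a]]]]]]]]]]].
  exact: (rule_b_properties two av FAea la bv FBeb lb tw bal big cut lab shortcut_only then_a).
Qed.
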